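(* Let $\Gamma$ be a Deza graph with parameters $(n,k,k-1,a)$, $k>1$, $\beta=1$. Let $x,y$ be two $A$-vertices with $\{x,x_b\}\ne\{y,y_b\}$. Then either all possible edges between $\{x,x_b\}$ and $\{y,y_b\}$ are present in $\Gamma$, or there are no such edges.
   Context: A Deza graph with parameters $(n,k,b,a)$, $a\le b$, is a $k$-regular graph on $n$ vertices in which any two distinct vertices have $a$ or $b$ common neighbours; $\beta$ is the number of vertices $u\ne v$ with exactly $b$ common neighbours with a given vertex $v$ (independent of $v$). Since $\beta=1$, for each vertex $x$ let $x_b$ denote the unique vertex having $b=k-1$ common neighbours with $x$. A vertex $x$ is an $A$-vertex if $x$ is adjacent to $x_b$, and an $NA$-vertex otherwise. *)

From mathcomp Require Import all_boot.
Set Implicit Arguments. Unset Strict Implicit. Unset Printing Implicit Defensive.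

Definition simple_graph (T : finType) (e : rel T) : Prop :=
  symmetric e /\ irreflexive e.

Definition cn (T : finType) (e : rel T) (x y : T) : nat :=
  #|[set z | e x z && e y z]|.

Definition regular (T : finType) (e : rel T) (k : nat) : Prop :=
  forall x : T, #|[set z | e x z]| = k.

Definition deza_graph (T : finType) (e : rel T) (n k b a : nat) : Prop :=
  [/\ simple_graph e, #|T| = n, regular e k, a <= b &
      forall x y : T, x != y -> cn e x y = a \/ cn e x y = b].

Definition deza_beta (T : finType) (e : rel T) (b beta : nat) : Prop :=
  forall v : T, #|[set u | (u != v) && (cn e v u == b)]| = beta.

From mathcomp Require Import all_boot.
Set Implicit Arguments. Unset Strict Implicit. Unset Printing Implicit Defensive.

(* Two adjacent vertices x, xb of a k-regular graph with k - 1 common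
   neighbours are twins: every other vertex of N(x) lies in N(xb), so both
   are adjacent to the same vertices outside {x, xb}.  When beta = 1 the
   pairs {x, xb} partition the A-vertices, so two distinct such pairs are
   disjoint, and the twin property of each pair makes the four adjacencies
   between them equal. *)

Lemma cnC (T : finType) (e : rel T) (x y : T) : cn e x y = cn e y x.
Proof. by apply: eq_card => z; rewrite !inE andbC. Qed.

Section Twins.

Variables (T : finType) (e : rel T) (k : nat).
Hypotheses (e_sym : symmetric e) (e_irr : irreflexive e) (e_reg : regular e k).

Lemma common_nbhd_eq_nbhdD1 (x xb : T) :
  e x xb -> cn e x xb = k.-1 ->
  [set z | e x z && e xb z] = [set z | e x z] :\ xb.
Proof.
move=> e_x_xb cn_x_xb; apply/eqP; rewrite eqEcard; apply/andP; split.
  apply/subsetP => z; rewrite !inE => /andP[e_xz e_xbz]; rewrite e_xz andbT.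
  by apply: contraTneq e_xbz => ->; rewrite e_irr.
have := cardsD1 xb [set z | e x z]; rewrite inE e_x_xb e_reg add1n => card_k.
by rewrite -/(cn e x xb) cn_x_xb card_k.
Qed.

Lemma adj_twins (x xb z : T) :
  e x xb -> cn e x xb = k.-1 -> z \notin [set x; xb] -> e x z = e xb z.
Proof.
move=> e_x_xb cn_x_xb; rewrite !inE negb_or => /andP[z_x z_xb].
have e_xb_x : e xb x by rewrite e_sym.
have cn_xb_x : cn e xb x = k.-1 by rewrite cnC.
have /setP/(_ z) := common_nbhd_eq_nbhdD1 e_x_xb cn_x_xb.
have /setP/(_ z) := common_nbhd_eq_nbhdD1 e_xb_x cn_xb_x.
by rewrite !inE z_x z_xb andbC /= => -> ->.
Qed.

End Twins.

Section UniquePartner.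

Variables (T : finType) (e : rel T) (b : nat).
Hypothesis beta1 : deza_beta e b 1.

Lemma deza_beta1_uniq (v u w : T) :
  u != v -> cn e v u = b -> w != v -> cn e v w = b -> u = w.
Proof.
move=> u_v cn_vu w_v cn_vw.
have [c partner_c] := cards1P (introT eqP (beta1 v)).
have : u \in [set u | (u != v) && (cn e v u == b)] by rewrite inE u_v cn_vu eqxx.
have : w \in [set u | (u != v) && (cn e v u == b)] by rewrite inE w_v cn_vw eqxx.
by rewrite partner_c !inE => /eqP -> /eqP ->.
Qed.

Lemma partner_pair_eq (x xb z zb : T) :
  xb != x -> cn e x xb = b -> zb != z -> cn e z zb = b ->
  z \in [set x; xb] -> [set z; zb] = [set x; xb].
Proof.
move=> xb_x cn_x_xb zb_z cn_z_zb; rewrite !inE => /orP[]/eqP z_eq; subst z.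
  by rewrite (deza_beta1_uniq zb_z cn_z_zb xb_x cn_x_xb).
have x_xb : x != xb by rewrite eq_sym.
have cn_xb_x : cn e xb x = b by rewrite cnC.
by rewrite setUC (deza_beta1_uniq zb_z cn_z_zb x_xb cn_xb_x).
Qed.

Lemma partner_notin_pair (x xb y yb : T) :
  xb != x -> cn e x xb = b -> yb != y -> cn e y yb = b ->
  [set x; xb] != [set y; yb] -> y \notin [set x; xb].
Proof.
move=> xb_x cn_x_xb yb_y cn_y_yb; apply: contra => y_in.
by rewrite (partner_pair_eq xb_x cn_x_xb yb_y cn_y_yb y_in).
Qed.

End UniquePartner.

Theorem lemma3 (T : finType) (e : rel T) (n k a : nat) (x xb y yb : T) :
  deza_graph e n k k.-1 a -> 1 < k -> deza_beta e k.-1 1 ->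
  xb != x -> cn e x xb = k.-1 ->
  yb != y -> cn e y yb = k.-1 ->
  e x xb -> e y yb ->
  [set x; xb] != [set y; yb] ->
  (e x y && e x yb && e xb y && e xb yb) \/
  (~~ e x y && ~~ e x yb && ~~ e xb y && ~~ e xb yb).
Proof.
move=> [[e_sym e_irr] _ e_reg _ _] _ beta1 xb_x cn_x_xb yb_y cn_y_yb
  e_x_xb e_y_yb pairs_ne.
have y_yb : y != yb by rewrite eq_sym.
have cn_yb_y : cn e yb y = k.-1 by rewrite cnC.
have pairs_ne' : [set y; yb] != [set x; xb] by rewrite eq_sym.
have y_out := partner_notin_pair beta1 xb_x cn_x_xb yb_y cn_y_yb pairs_ne.
have yb_out : yb \notin [set x; xb].
  apply: (partner_notin_pair beta1 xb_x cn_x_xb y_yb cn_yb_y).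
  by rewrite [[set yb; y]]setUC.
have x_out := partner_notin_pair beta1 yb_y cn_y_yb xb_x cn_x_xb pairs_ne'.
rewrite -(adj_twins e_sym e_irr e_reg e_x_xb cn_x_xb y_out).
rewrite -(adj_twins e_sym e_irr e_reg e_x_xb cn_x_xb yb_out).
rewrite (e_sym x yb) -(adj_twins e_sym e_irr e_reg e_y_yb cn_y_yb x_out).
rewrite (e_sym y x).
by case: (e x y); [left | right].
Qed.
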